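(* Let $R$ be a ring, $*\in\{l,r,\emptyset\}$, and $S_1,\dots,S_n\in\mathbb{L}_*(R)$. Let $\mathfrak{p}_i=\mathrm{ass}_R(S_i)$, $R_i=R/\mathfrak{p}_i$, and $Q_i=R\langle S_i^{-1}\rangle$ the localization of $R$ at $S_i$. Suppose the rings $Q_i$ are simple Artinian, $\bigcap_{i=1}^n\mathfrak{p}_i=0$, and $\bigcap_{j\neq i}\mathfrak{p}_j\neq0$ for each $i=1,\dots,n$. Then \begin{enumerate} \item the rings $R_i$ are semiprime $*$ Goldie rings; \item $\min(R)=\{\mathfrak{p}_1,\dots,\mathfrak{p}_n\}$; \item $Q_i\simeq Q_{*,cl}(R_i)$ for $i=1,\dots,n$ (an $R$-isomorphism); \item $S_i\subseteq\mathcal{C}(\mathfrak{p}_i)$ for $i=1,\dots,n$; \item $Q_{*,cl}(R)\simeq\prod_{i=1}^nQ_i$; \item $\mathcal{C}(\mathfrak{p}_i)\in\max\mathbb{L}_*(R)$ for all $i=1,\dots,n$. \end{enumerate}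
   Context: Rings are associative with $1$. Multiplicative set: $SS\subseteq S$, $1\in S$, $0\notin S$. $R\langle S^{-1}\rangle=R\langle X_S\rangle/I_S$ ($R\langle X_S\rangle$ freely generated by $R$ and noncommuting $x_s$; $I_S$ generated by $sx_s-1,x_ss-1$); $\mathrm{ass}_R(S)=\ker(R\to R\langle S^{-1}\rangle)$. Left (resp. right) localizable: $R\langle S^{-1}\rangle\ne0$ and each element has the form $(x_s+I_S)(r+I_S)$ (resp. $(r+I_S)(x_s+I_S)$); localizable: both; $\mathbb{L}_l,\mathbb{L}_r,\mathbb{L}_\emptyset$ are these sets, $\max$ denotes maximal elements w.r.t. inclusion. ''$*$ Goldie'' means left Goldie, right Goldie, or (two-sided) Goldie for $*=l,r,\emptyset$. $Q_{l,cl}(A)=\mathcal{C}_A^{-1}A$, $Q_{r,cl}(A)=A\mathcal{C}_A^{-1}$, $Q_{\emptyset,cl}(A)$ the classical two-sided quotient ring, where $\mathcal{C}_A$ is the set of regular elements. $\min(R)$ is the set of minimal primes; $\mathcal{C}(\mathfrak{p})=\{c\in R:c+\mathfrak{p}\in\mathcal{C}_{R/\mathfrak{p}}\}$. *)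

(* Noncommutative rings = pzRingType (associative, with 1;
   the zero ring is allowed). Subsets / ideals are Prop-valued predicates. *)
From HB Require Import structures.
From mathcomp Require Import all_boot all_order all_algebra.
Set Implicit Arguments. Unset Strict Implicit. Unset Printing Implicit Defensive.
Import GRing.Theory.
Local Open Scope ring_scope.

(* the parameter * in {l, r, empty} *)
Inductive side := sideL | sideR | sideLR.

Section RingDefs.
Variable T : pzRingType.

Definition invertible (x : T) := exists y : T, x * y = 1 /\ y * x = 1.

Definition mult_set (S : T -> Prop) :=
  S 1 /\ ~ S 0 /\ (forall s t, S s -> S t -> S (s * t)).

Definition left_ideal (I : T -> Prop) :=
  I 0 /\ (forall x y, I x -> I y -> I (x + y)) /\ (forall x, I x -> I (- x))
  /\ (forall r x, I x -> I (r * x)).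
Definition right_ideal (I : T -> Prop) :=
  I 0 /\ (forall x y, I x -> I y -> I (x + y)) /\ (forall x, I x -> I (- x))
  /\ (forall r x, I x -> I (x * r)).
Definition ideal (I : T -> Prop) := left_ideal I /\ right_ideal I.

Definition left_artinian :=
  forall I : nat -> T -> Prop, (forall k, left_ideal (I k)) ->
    (forall k x, I k.+1 x -> I k x) ->
    exists m, forall k, (m <= k)%N -> forall x, I k x <-> I m x.

Definition simple_ring :=
  (1 : T) <> 0 /\
  forall I, ideal I -> (forall x, I x -> x = 0) \/ (forall x, I x).

Definition simple_artinian := simple_ring /\ left_artinian.

Definition semiprime :=
  forall A, ideal A -> (forall a b, A a -> A b -> a * b = 0) ->
    forall a, A a -> a = 0.

Definition prime_ideal (P : T -> Prop) :=
  ideal P /\ (exists x, ~ P x) /\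
  forall A B, ideal A -> ideal B -> (forall a b, A a -> B b -> P (a * b)) ->
    (forall a, A a -> P a) \/ (forall b, B b -> P b).

Definition minimal_prime (P : T -> Prop) :=
  prime_ideal P /\
  forall P', prime_ideal P' -> (forall x, P' x -> P x) -> forall x, P x -> P' x.

Definition lann (X : T -> Prop) : T -> Prop := fun r => forall x, X x -> r * x = 0.
Definition rann (X : T -> Prop) : T -> Prop := fun r => forall x, X x -> x * r = 0.

Definition acc_lann :=
  forall X : nat -> T -> Prop,
    (forall k x, lann (X k) x -> lann (X k.+1) x) ->
    exists m, forall k, (m <= k)%N -> forall x, lann (X k) x <-> lann (X m) x.
Definition acc_rann :=
  forall X : nat -> T -> Prop,
    (forall k x, rann (X k) x -> rann (X k.+1) x) ->
    exists m, forall k, (m <= k)%N -> forall x, rann (X k) x <-> rann (X m) x.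

Definition independent (I : nat -> T -> Prop) :=
  forall (m : nat) (x : nat -> T), (forall k, (k < m)%N -> I k (x k)) ->
    \sum_(k < m) x k = 0 -> forall k, (k < m)%N -> x k = 0.

(* finite uniform dimension: no infinite direct sum of nonzero one-sided ideals *)
Definition left_finite_udim :=
  ~ exists I : nat -> T -> Prop, (forall k, left_ideal (I k)) /\
      (forall k, exists x, I k x /\ x <> 0) /\ independent I.
Definition right_finite_udim :=
  ~ exists I : nat -> T -> Prop, (forall k, right_ideal (I k)) /\
      (forall k, exists x, I k x /\ x <> 0) /\ independent I.

Definition left_goldie := acc_lann /\ left_finite_udim.
Definition right_goldie := acc_rann /\ right_finite_udim.

Definition goldie (sd : side) :=
  match sd with
  | sideL => left_goldie
  | sideR => right_goldie
  | sideLR => left_goldie /\ right_goldie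
  end.

Definition regular (c : T) := forall a, (a * c = 0 -> a = 0) /\ (c * a = 0 -> a = 0).

(* C(p) = { c : c + p regular in T/p }, written out elementwise *)
Definition cset (p : T -> Prop) : T -> Prop :=
  fun c => forall a, (p (a * c) -> p a) /\ (p (c * a) -> p a).
End RingDefs.

Section Loc.
Variables (R : pzRingType).

Definition left_frac (S : R -> Prop) (Q : pzRingType) (phi : R -> Q) (q : Q) :=
  exists s r y, S s /\ phi s * y = 1 /\ y * phi s = 1 /\ q = y * phi r.
Definition right_frac (S : R -> Prop) (Q : pzRingType) (phi : R -> Q) (q : Q) :=
  exists s r y, S s /\ phi s * y = 1 /\ y * phi s = 1 /\ q = phi r * y.

Definition frac_form (sd : side) (S : R -> Prop) (Q : pzRingType) (phi : R -> Q) :=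
  forall q : Q, match sd with
  | sideL => left_frac S phi q
  | sideR => right_frac S phi q
  | sideLR => left_frac S phi q /\ right_frac S phi q
  end.

(* (Q, phi) is the universal S-inverting ring R<S^{-1}> (universal property
   of R<X_S>/I_S, which determines it up to unique R-isomorphism) *)
Definition universal_loc (S : R -> Prop) (Q : pzRingType) (phi : {rmorphism R -> Q}) :=
  (forall s, S s -> invertible (phi s)) /\
  forall (T : pzRingType) (f : {rmorphism R -> T}),
    (forall s, S s -> invertible (f s)) ->
    exists g : {rmorphism Q -> T},
      (forall r, g (phi r) = f r) /\
      (forall g' : {rmorphism Q -> T}, (forall r, g' (phi r) = f r) -> forall q, g' q = g q).

Definition ass (Q : pzRingType) (phi : {rmorphism R -> Q}) : R -> Prop :=
  fun r => phi r = 0.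

Definition localizable (sd : side) (S : R -> Prop) (Q : pzRingType) (phi : {rmorphism R -> Q}) :=
  (1 : Q) <> 0 /\ frac_form sd S phi.

Definition inL (sd : side) (S : R -> Prop) :=
  mult_set S /\
  exists (Q : pzRingType) (phi : {rmorphism R -> Q}),
    universal_loc S phi /\ localizable sd S phi.

Definition classical_quotient (sd : side) (Q : pzRingType) (j : {rmorphism R -> Q}) :=
  injective j /\ (forall c, regular c -> invertible (j c)) /\
  frac_form sd (@regular R) j.
End Loc.

(* Every left ideal of a simple left artinian ring Q is generated by an
   idempotent.  Consequently Q is left noetherian, its right ideals are double
   annihilators, and Q is right artinian too; so whatever holds for left
   fractions also holds for right fractions, by passing to opposite rings.

   For a localization f : R -> Q with Q simple artinian, an ideal of R that is
   not killed by f extends to a nonzero two-sided ideal of Q, which must be Q;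
   hence it contains an element that becomes a unit.  This makes ker f prime and
   turns C(ker f) into units, so R / ker f is an order in Q and inherits the
   Goldie conditions from Q.  A multiplicative set T containing C(ker f) with a
   nonzero localization receives Q injectively, because Q is simple, so
   elements of T are regular in Q and therefore units: C(ker f) is maximal.

   The p_i are primes with zero intersection and each q_i = cap_(j != i) p_j is
   nonzero, so the p_i are exactly the minimal primes and regular elements of R
   lie in every C(p_i).  Choosing c_i in q_i invertible in Q_i, the sums
   sum_i c_i s_i glue fractions over the Q_i into a single fraction over R with
   regular denominator, so prod_i Q_i is the classical quotient ring of R. *)

From HB Require Import structures.
From mathcomp Require Import all_boot all_order all_algebra.
From Stdlib Require Import Classical ClassicalEpsilon FunctionalExtensionality PropExtensionality.
Set Implicit Arguments. Unset Strict Implicit. Unset Printing Implicit Defensive.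
Import GRing.Theory.
Local Open Scope ring_scope.

Local Notation "A `<=` B" := (forall x, A x -> B x) (at level 70, no associativity).

(** * Ideals, units and opposite rings *)

Section Ideals.
Variable T : pzRingType.
Implicit Types (I J X : T -> Prop) (a : T).

Definition nonzero I := exists x, I x /\ x <> 0.

Lemma left_idealT : left_ideal (fun _ : T => True).
Proof. by []. Qed.

Lemma left_ideal0 : left_ideal (fun x : T => x = 0).
Proof.
split=> //; split; first by move=> x y -> ->; rewrite addr0.
by split=> [x ->|r x ->]; rewrite ?oppr0 ?mulr0.
Qed.

Lemma left_idealI I J : left_ideal I -> left_ideal J -> left_ideal (fun x => I x /\ J x).
Proof.
move=> [I0 [ID [IN IM]]] [J0 [JD [JN JM]]]; split=> //; split.
  by move=> x y [Ix Jx] [Iy Jy]; split; [apply: ID | apply: JD].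
by split=> [x [Ix Jx] | r x [Ix Jx]]; split; auto.
Qed.

Lemma left_ideal_rmul_preim I a : left_ideal I -> left_ideal (fun x => I (x * a)).
Proof.
move=> [I0 [ID [IN IM]]]; split; first by rewrite mul0r.
split; first by move=> x y Ix Iy; rewrite mulrDl; apply: ID.
by split=> [x Ix | r x Ix]; rewrite ?mulNr -?mulrA; auto.
Qed.

Lemma left_ideal_rmul_image I a :
  left_ideal I -> left_ideal (fun x => exists2 z, I z & x = z * a).
Proof.
move=> [I0 [ID [IN IM]]]; split; first by exists 0; rewrite ?mul0r.
split; first by move=> _ _ [z Iz ->] [w Iw ->]; exists (z + w); rewrite ?mulrDl; auto.
split; first by move=> _ [z Iz ->]; exists (- z); rewrite ?mulNr; auto.
by move=> r _ [z Iz ->]; exists (r * z); rewrite ?mulrA; auto.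
Qed.

Lemma left_ideal_sum (I : nat -> T -> Prop) m : (forall k, left_ideal (I k)) ->
  left_ideal (fun x => exists2 y : nat -> T,
    forall k, (k < m)%N -> I k (y k) & x = \sum_(k < m) y k).
Proof.
move=> LI; split.
  by exists (fun=> 0) => [k _ | ]; [case: (LI k) | rewrite big1].
split.
  move=> _ _ [y Iy ->] [y' Iy' ->]; exists (fun k => y k + y' k); last by rewrite big_split.
  by move=> k km; case: (LI k) => _ [ID _]; apply: ID; auto.
split.
  move=> _ [y Iy ->]; exists (fun k => - y k); last by rewrite sumrN.
  by move=> k km; case: (LI k) => _ [_ [IN _]]; auto.
move=> r _ [y Iy ->]; exists (fun k => r * y k); last by rewrite mulr_sumr.
by move=> k km; case: (LI k) => _ [_ [_ IM]]; auto.
Qed.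

Lemma left_ideal_lann X : left_ideal (lann X).
Proof.
split; first by move=> x _; rewrite mul0r.
split; first by move=> a b Ha Hb x Xx; rewrite mulrDl Ha // Hb // addr0.
by split=> [a Ha | r a Ha] x Xx; rewrite ?mulNr -?mulrA Ha ?oppr0 ?mulr0.
Qed.

Lemma ideal_lann X : (forall r x, X x -> X (r * x)) -> ideal (lann X).
Proof.
move=> XM; split; first exact: left_ideal_lann.
have [L0 [LD [LN _]]] := left_ideal_lann X.
by split=> //; split=> //; split=> // r a Ha x Xx; rewrite -mulrA Ha //; apply: XM.
Qed.

Lemma ideal_rann X : (forall r x, X x -> X (x * r)) -> ideal (rann X).
Proof.
move=> XM; split; last first.
  split; first by move=> x _; rewrite mulr0.
  split; first by move=> a b Ha Hb x Xx; rewrite mulrDr Ha // Hb // addr0.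
  by split=> [a Ha | r a Ha] x Xx; rewrite ?mulrN ?mulrA Ha ?oppr0 ?mul0r.
split; first by move=> x _; rewrite mulr0.
split; first by move=> a b Ha Hb x Xx; rewrite mulrDr Ha // Hb // addr0.
by split=> [a Ha | r a Ha] x Xx; rewrite ?mulrN ?mulrA ?Ha ?oppr0 ?mul0r //; apply: XM.
Qed.

Lemma ideal0 : ideal (fun x : T => x = 0).
Proof.
split; first exact: left_ideal0.
split=> //; split; first by move=> x y -> ->; rewrite addr0.
by split=> [x -> | r x ->]; rewrite ?oppr0 ?mul0r.
Qed.

Lemma ideal_cap (K : Type) (I : K -> T -> Prop) (P : K -> Prop) :
  (forall k, ideal (I k)) -> ideal (fun x => forall k, P k -> I k x).
Proof.
move=> II; split; (split; first by move=> k _; case: (II k) => [[]]);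
  (split; first by move=> x y Hx Hy k Pk; case: (II k) => [[_ []]] //; auto);
  (split; first by move=> x Hx k Pk; case: (II k) => [[_ [_ []]]] //; auto);
  by move=> r x Hx k Pk; case: (II k) => [[_ [_ [_ ?]]] [_ [_ [_ ?]]]]; auto.
Qed.

Lemma ideal_preim (U : pzRingType) (f : {rmorphism T -> U}) (I : U -> Prop) :
  ideal I -> ideal (fun r => I (f r)).
Proof.
move=> [[I0 [ID [IN IL]]] [_ [_ [_ IR]]]].
split; (split; first by rewrite rmorph0);
  (split; first by move=> x y Ix Iy; rewrite rmorphD; apply: ID);
  (split; first by move=> x Ix; rewrite rmorphN; apply: IN);
  by move=> r x Ix; rewrite rmorphM; auto.
Qed.

End Ideals.

Lemma invertibleM (T : pzRingType) (a b : T) :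
  invertible a -> invertible b -> invertible (a * b).
Proof.
move=> [x [ax xa]] [y [bY yb]]; exists (y * x); split.
  by rewrite -mulrA (mulrA b) bY mul1r ax.
by rewrite -mulrA (mulrA x) xa mul1r yb.
Qed.

Lemma regular_of_invertible (T U : pzRingType) (g : {rmorphism T -> U}) c :
  injective g -> invertible (g c) -> regular c.
Proof.
move=> ginj [w [cw wc]] a; split=> e; apply: ginj; rewrite rmorph0.
  by rewrite -[g a]mulr1 -cw mulrA -rmorphM e rmorph0 mul0r.
by rewrite -[g a]mul1r -wc -mulrA -rmorphM e rmorph0 mulr0.
Qed.

Lemma cset_of_invertible (R Q : pzRingType) (f : {rmorphism R -> Q}) c :
  invertible (f c) -> cset (fun r => f r = 0) c.
Proof.
move=> [w [cw wc]] a; rewrite !rmorphM; split=> e.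
  by rewrite -[f a]mulr1 -cw mulrA e mul0r.
by rewrite -[f a]mul1r -wc -mulrA e mulr0.
Qed.

Lemma mult_set_cset (T : pzRingType) (P : T -> Prop) :
  P 0 -> (exists x, ~ P x) -> mult_set (cset P).
Proof.
move=> P0 [x0 Px0]; split; first by move=> a; rewrite mulr1 mul1r.
split; first by move=> C0; apply: Px0; apply: (proj1 (C0 x0)); rewrite mulr0.
move=> c d Cc Cd a; split.
  by rewrite mulrA => /(proj1 (Cd _)) /(proj1 (Cc _)).
by rewrite -mulrA => /(proj2 (Cc _)) /(proj2 (Cd _)).
Qed.

Lemma mult_set_regular (T : pzRingType) : (1 : T) <> 0 -> mult_set (@regular T).
Proof. by move=> one0; apply: (@mult_set_cset T (fun x => x = 0)) => //; exists 1. Qed.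

Lemma regular_cset (T : pzRingType) (P J : T -> Prop) c :
  prime_ideal P -> ideal J -> (forall x, J x -> P x -> x = 0) -> ~ J `<=` P ->
  regular c -> cset P c.
Proof.
move=> [[[P0 [_ [_ PL]]] [_ [_ [_ PR]]]] [_ primeP]] IJ JP0 JnP Cc a.
have [[_ [_ [_ JL]]] [_ [_ [_ JR]]]] := IJ.
split=> Pa.
- have Ba : rann J a.
    move=> x Jx; apply: (proj1 (Cc _)); rewrite -mulrA.
    by apply: JP0; [apply: JR | apply: PL].
  have JB x b : J x -> rann J b -> P (x * b) by move=> Jx Bb; rewrite Bb.
  by case: (primeP _ _ IJ (ideal_rann JR) JB) => [/JnP [] | /(_ a Ba)].
- have Ba : lann J a.
    move=> x Jx; apply: (proj2 (Cc _)); rewrite mulrA.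
    by apply: JP0; [apply: JL | apply: PR].
  have BJ b x : lann J b -> J x -> P (b * x) by move=> Bb Jx; rewrite Bb.
  by case: (primeP _ _ (ideal_lann JL) IJ BJ) => [/(_ a Ba) | /JnP []].
Qed.

Lemma prime_ideal_cap (T : pzRingType) (K : eqType) (J : K -> T -> Prop) (P : T -> Prop)
    (s : seq K) :
  prime_ideal P -> (forall k, ideal (J k)) ->
  (forall x, (forall k, k \in s -> J k x) -> P x) -> exists2 k, k \in s & J k `<=` P.
Proof.
move=> [_ [[x0 Px0] primeP]] IJ; elim: s => [|k s IH] sP; first by case: Px0; apply: sP.
have IJs := ideal_cap (fun k => k \in s) IJ.
case: (primeP _ _ (IJ k) IJs) => [a b Ja Jb | Jk | Js]; last 2 first.
- by exists k; rewrite ?mem_head.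
- by have [k' k's Jk'] := IH Js; exists k'; rewrite // in_cons k's orbT.
apply: sP => k'; rewrite in_cons => /orP [/eqP -> | k's].
  by case: (IJ k) => _ [_ [_ [_]]]; apply.
by case: (IJ k') => [[_ [_ [_ JL]]] _]; apply: JL; apply: Jb.
Qed.

Section ConverseMorphism.
Variables (R Q : pzRingType) (f : {rmorphism R -> Q}).

Definition conv_fun : R^c -> Q^c := f.

Fact conv_fun_is_nmod : nmod_morphism conv_fun.
Proof. by split=> [|x y]; [exact: (rmorph0 f) | exact: (rmorphD f x y)]. Qed.

Fact conv_fun_is_monoid : monoid_morphism conv_fun.
Proof. by split=> [|x y]; [exact: (rmorph1 f) | exact: (rmorphM f y x)]. Qed.

HB.instance Definition _ := GRing.isNmodMorphism.Build R^c Q^c conv_fun conv_fun_is_nmod.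
HB.instance Definition _ := GRing.isMonoidMorphism.Build R^c Q^c conv_fun conv_fun_is_monoid.

Lemma left_frac_conv (S : R -> Prop) q : right_frac S f q -> @left_frac R^c S Q^c conv_fun q.
Proof. by move=> [s [r [y [Ss [sy [ys E]]]]]]; exists s, r, y. Qed.

End ConverseMorphism.

Lemma invertible_conv (T : pzRingType) (x : T) : @invertible T^c x <-> invertible x.
Proof. by split=> -[y [xy yx]]; exists y. Qed.

Lemma mult_set_conv (T : pzRingType) (S : T -> Prop) : mult_set S -> @mult_set T^c S.
Proof. by move=> [S1 [S0 SM]]; split=> //; split=> // s t Ss St; apply: SM. Qed.

(** * Simple artinian rings *)

Section Idempotents.
Variable T : pzRingType.

Definition idem_gen (L : T -> Prop) (e : T) := e * e = e /\ forall x, L x <-> x = x * e.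

Definition idem_join (e f : T) := e + f - e * f.

Lemma idem_joinP (e f : T) : e * e = e -> f * f = f -> f * e = 0 ->
  let g := idem_join e f in [/\ g * g = g, g * e = e, e * g = e, g * f = f & f * g = f].
Proof.
move=> ee ff fe g.
have ge : g * e = e by rewrite /g /idem_join !mulrDl mulNr -mulrA !fe mulr0 ee subr0 addr0.
have gf : g * f = f by rewrite /g /idem_join !mulrDl mulNr -mulrA ff addrAC subrr add0r.
split=> //.
- by rewrite {2}/g /idem_join !mulrDr mulrN ge gf mulrA ge.
- by rewrite /g /idem_join !mulrDr mulrN ee mulrA ee addrK.
- by rewrite /g /idem_join !mulrDr mulrN ff fe mulrA fe mul0r subr0 add0r.
Qed.

End Idempotents.

Section LeftArtinian.
Variable Q : pzRingType.
Hypothesis artQ : left_artinian Q.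

Lemma left_artinian_min (F : (Q -> Prop) -> Prop) :
  (forall L, F L -> left_ideal L) -> (exists L, F L) ->
  exists2 L, F L & forall L', F L' -> L' `<=` L -> L `<=` L'.
Proof.
move=> FL [L0 FL0]; apply: NNPP => noMin.
have next L : exists L', F L -> [/\ F L', L' `<=` L & ~ L `<=` L'].
  case: (classic (F L)) => [FLL|]; last by exists L.
  apply: NNPP => nxt; apply: noMin; exists L => // L' FL' sL'; apply: NNPP => nsub.
  by apply: nxt; exists L'.
have [nxt nxtP] := ClassicalEpsilon.choice _ next.
pose chain k := iter k nxt L0.
have F_chain k : F (chain k) by elim: k => //= k IH; case: (nxtP _ IH).
have chain_dec k : chain k.+1 `<=` chain k by case: (nxtP _ (F_chain k)).
have [m Hm] := artQ (fun k => FL _ (F_chain k)) chain_dec.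
by case: (nxtP _ (F_chain m)) => _ _; apply=> x /(Hm m.+1 (leqnSn m)).
Qed.

Lemma left_artinian_rmul_stable (Z : Q -> Prop) (u : Q) :
  left_ideal Z -> (forall z, Z z -> Z (z * u)) ->
  exists m, forall z, Z z -> exists2 w, Z w & z * u ^+ m = w * u ^+ m.+1.
Proof.
move=> LZ Zu.
pose chain k x := exists2 z, Z z & x = z * u ^+ k.
have chain_dec k : chain k.+1 `<=` chain k.
  by move=> _ [z Zz ->]; exists (z * u); rewrite ?exprS ?mulrA; auto.
have [m Hm] := artQ (fun k => left_ideal_rmul_image (u ^+ k) LZ) chain_dec.
by exists m => z Zz; apply/(Hm m.+1 (leqnSn m)); exists z.
Qed.

Lemma left_artinian_lreg_invertible (a : Q) :
  (forall x, x * a = 0 -> x = 0) -> invertible a.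
Proof.
move=> lreg_a.
have lreg_pow k x : x * a ^+ k = 0 -> x = 0.
  by elim: k x => [|k IH] x; rewrite ?expr0 ?mulr1 // exprSr mulrA => /lreg_a /IH.
have [m Hm] := left_artinian_rmul_stable (u := a) (@left_idealT Q) (fun _ _ => I).
have [w _ e] := Hm 1 I.
have wa : w * a = 1.
  apply/eqP; rewrite -subr_eq0; apply/eqP/(lreg_pow m).
  by rewrite mulrBl e exprS mulrA subrr.
exists w; split=> //; apply/eqP; rewrite -subr_eq0; apply/eqP/lreg_a.
by rewrite mulrBl -mulrA wa mulr1 mul1r subrr.
Qed.

Lemma left_artinian_rmul_inv (Z : Q -> Prop) (u v : Q) :
  left_ideal Z -> u * v = 1 -> v * u = 1 ->
  (forall z, Z z -> Z (z * u)) -> forall z, Z z -> Z (z * v).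
Proof.
move=> LZ uv vu Zu z Zz.
have uvk k : u ^+ k * v ^+ k = 1.
  elim: k => [|k IH]; first by rewrite !expr0 mulr1.
  by rewrite exprS exprSr -mulrA (mulrA (u ^+ k)) IH mul1r uv.
have [m Hm] := left_artinian_rmul_stable LZ Zu.
have [w Zw e] := Hm z Zz.
suff -> : z = w * u by rewrite -mulrA uv mulr1.
by rewrite -[z]mulr1 -(uvk m) mulrA e exprS -!mulrA uvk mulr1.
Qed.

End LeftArtinian.

Definition left_noetherian (T : pzRingType) :=
  forall L : nat -> T -> Prop, (forall k, left_ideal (L k)) -> (forall k, L k `<=` L k.+1) ->
    exists m, forall k, (m <= k)%N -> forall x, L k x <-> L m x.

Section SimpleLeftArtinian.
Variable Q : pzRingType.
Hypotheses (simQ : simple_ring Q) (artQ : left_artinian Q).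

Lemma simple_left_ideal_mul_neq0 (M : Q -> Prop) : left_ideal M -> nonzero M ->
  exists m m', [/\ M m, M m' & m' * m <> 0].
Proof.
move=> [_ [_ [_ MM]]] [x [Mx x0]].
have [lann0|lann1] := proj2 simQ _ (ideal_lann MM).
  apply: NNPP => H; apply: x0; apply: lann0 => m Mm; apply: NNPP => xm.
  by apply: H; exists m, x.
by case: x0; rewrite -[x]mul1r; apply: lann1.
Qed.

Lemma minimal_left_ideal_idem (M : Q -> Prop) : left_ideal M -> nonzero M ->
  (forall M', left_ideal M' -> nonzero M' -> M' `<=` M -> M `<=` M') ->
  exists e, [/\ M e, e * e = e & e <> 0].
Proof.
move=> LM nzM Mmin; have [M0 [MD [MN MM]]] := LM.
have [m [m' [Mm Mm' mm0]]] := simple_left_ideal_mul_neq0 LM nzM.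
have [e Me em] : exists2 e, M e & m = e * m.
  apply: (Mmin _ (left_ideal_rmul_image m LM)) => //; last by move=> _ [z Mz ->]; apply: (MM).
  by exists (m' * m); split=> //; exists m'.
pose N x := M x /\ x * m = 0.
have LN : left_ideal N := left_idealI LM (left_ideal_rmul_preim m (left_ideal0 Q)).
have N0 x : N x -> x = 0.
  move=> Nx; apply: NNPP => x0.
  by case: (Mmin N LN (ex_intro _ x (conj Nx x0)) (fun y => @proj1 _ _) m' Mm').
exists e; split=> //.
  apply/eqP; rewrite -subr_eq0; apply/eqP/N0; split.
    by apply: (MD); [exact: (MM) | exact: (MN)].
  by rewrite mulrBl -mulrA -em -em subrr.
by move=> e0; apply: mm0; rewrite em e0 mul0r mulr0.
Qed.

Lemma left_ideal_idem_neq0 (L : Q -> Prop) : left_ideal L -> nonzero L ->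
  exists e, [/\ L e, e * e = e & e <> 0].
Proof.
move=> LL nzL.
pose F M := [/\ left_ideal M, nonzero M & M `<=` L].
have [M [LM nzM sML] Mmin] : exists2 M, F M & forall M', F M' -> M' `<=` M -> M `<=` M'.
  by apply: (left_artinian_min artQ) => [M []|] //; exists L.
have [e [Me ee e0]] := minimal_left_ideal_idem LM nzM
  (fun M' LM' nzM' sM' => Mmin M' (And3 LM' nzM' (fun x Mx => sML x (sM' x Mx))) sM').
by exists e; split=> //; apply: sML.
Qed.

(* Take e making L ∩ lann e minimal; a nonzero idempotent in L ∩ lann e
   would yield the larger idempotent idem_join e f. *)
Lemma left_ideal_idem_gen (L : Q -> Prop) : left_ideal L -> exists e, idem_gen L e.
Proof.
move=> LL; have [L0 [LD [LN LM]]] := LL.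
pose F N := exists e, [/\ L e, e * e = e & N = fun x => L x /\ x * e = 0].
have FL N : F N -> left_ideal N.
  by move=> [e [_ _ ->]]; exact: (left_idealI LL (left_ideal_rmul_preim e (left_ideal0 Q))).
have F0 : F (fun x => L x /\ x * 0 = 0) by exists 0; split; rewrite ?mulr0.
have [_ [e [Le ee ->]] Nmin] := left_artinian_min artQ FL (ex_intro _ _ F0).
have Lann0 x : L x -> x * e = 0 -> x = 0.
  move=> Lx xe; apply: NNPP => x0.
  have [f [[Lf fe] ff f0]] := left_ideal_idem_neq0 (FL _ (ex_intro _ e (And3 Le ee erefl)))
    (ex_intro _ x (conj (conj Lx xe) x0)).
  have [gg ge eg gf fg] := idem_joinP ee ff fe.
  have Fg : F (fun x => L x /\ x * idem_join e f = 0).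
    by exists (idem_join e f); split=> //; apply: (LD); [apply: (LD) | apply: (LN); apply: (LM)].
  have sub : (fun x => L x /\ x * idem_join e f = 0) `<=` (fun x => L x /\ x * e = 0).
    by move=> y [Ly yg]; split=> //; rewrite -ge mulrA yg mul0r.
  by case: (Nmin _ Fg sub f (conj Lf fe)) => _; rewrite fg.
exists e; split=> // x; split=> [Lx | ->]; last exact: (LM).
apply/eqP; rewrite -subr_eq0; apply/eqP/Lann0; first by apply: (LD) => //; apply: (LN); apply: (LM).
by rewrite mulrBl -mulrA ee subrr.
Qed.

Lemma simple_artinian_vnr (a : Q) : exists w, a * w * a = a.
Proof.
have [g [gg Hg]] := left_ideal_idem_gen (left_ideal_rmul_image a (@left_idealT Q)).
have [w _ gw] := (Hg g).2 (esym gg).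
exists w; rewrite -mulrA -gw.
by apply/esym/(Hg a).1; exists 1; rewrite ?mul1r.
Qed.

(* Take h in K with minimal left annihilator; for k in K, an idempotent
   generating (k - h k) Q would enlarge h unless k = h k. *)
Lemma right_ideal_idem_gen (K : Q -> Prop) : right_ideal K ->
  exists h, h * h = h /\ forall x, K x <-> x = h * x.
Proof.
move=> [K0 [KD [KN KM]]].
pose F L := exists h, [/\ K h, h * h = h & L = fun x => x * h = 0].
have FL L : F L -> left_ideal L.
  by move=> [h [_ _ ->]]; exact: (left_ideal_rmul_preim h (left_ideal0 Q)).
have F0 : F (fun x => x * 0 = 0) by exists 0; split; rewrite ?mulr0.
have [_ [h [Kh hh ->]] Lmin] := left_artinian_min artQ FL (ex_intro _ _ F0).
suff Kh_gen k : K k -> k = h * k.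
  by exists h; split=> // x; split=> [/Kh_gen // | ->]; apply: (KM).
move=> Kk; pose b := k - h * k.
have Kb : K b by apply: (KD) => //; apply: (KN); apply: (KM).
have hb : h * b = 0 by rewrite mulrBr mulrA hh subrr.
have [w bwb] := simple_artinian_vnr b.
pose g := b * w.
have gg : g * g = g by rewrite /g mulrA bwb.
have gb : g * b = b by rewrite /g bwb.
have hg : h * g = 0 by rewrite /g mulrA hb mul0r.
have [jj jg gj jh hj] := idem_joinP gg hh hg.
have Fj : F (fun x => x * idem_join g h = 0).
  have Kg : K g by apply: (KM).
  by exists (idem_join g h); split=> //; apply: (KD); [apply: (KD) | apply: (KN); apply: (KM)].
have sub : (fun x => x * idem_join g h = 0) `<=` (fun x => x * h = 0).
  by move=> x xj; rewrite -jh mulrA xj mul0r.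
have hj' : idem_join g h = h * idem_join g h.
  apply/eqP; rewrite -subr_eq0 -{1}[idem_join g h]mul1r -mulrBl; apply/eqP.
  by apply: (Lmin _ Fj sub); rewrite mulrBl mul1r hh subrr.
have b0 : b = 0.
  have -> : b = h * (idem_join g h * (g * b)) by rewrite mulrA -hj' (mulrA _ g) jg gb.
  by rewrite (mulrA _ g) jg gb hb.
by apply/eqP; rewrite -subr_eq0 -/b b0.
Qed.

Lemma right_ideal_rann_lann (K : Q -> Prop) : right_ideal K ->
  forall x, K x <-> rann (lann K) x.
Proof.
move=> RK x; have [h [hh HK]] := right_ideal_idem_gen RK.
split=> [Kx y Hy | H]; first exact: Hy.
apply/HK/eqP; rewrite -subr_eq0 -{1}[x]mul1r -mulrBl; apply/eqP/H => z /HK ->.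
by rewrite mulrA mulrBl mul1r hh subrr mul0r.
Qed.

Lemma idem_gen_extend (L L' : Q -> Prop) (e : Q) :
  left_ideal L' -> L `<=` L' -> idem_gen L e ->
  exists e', [/\ idem_gen L' e', e * e' = e & e' * e = e].
Proof.
move=> LL' sLL' [ee HL]; have [L0 [LD [LN LM]]] := LL'.
have L'e : L' e by apply/sLL'/HL; rewrite ee.
have [h [hh HN]] :=
  left_ideal_idem_gen (left_idealI LL' (left_ideal_rmul_preim e (left_ideal0 Q))).
have [L'h he] : L' h /\ h * e = 0 by apply/HN; rewrite hh.
have [jj je ej jh hj] := idem_joinP ee hh he.
exists (idem_join e h); split=> //; split=> // x; split=> [L'x | ->]; last first.
  by apply: (LM); apply: (LD); [apply: (LD) | apply: (LN); apply: (LM)].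
have : x - x * e = (x - x * e) * h.
  apply/HN; split; first by apply: (LD) => //; apply: (LN); apply: (LM).
  by rewrite mulrBl -mulrA ee subrr.
by move=> E; rewrite /idem_join mulrBr mulrDr mulrA -addrA -mulrBl -E addrC subrK.
Qed.

(* The idempotent generators of an ascending chain can be chosen increasing,
   so their left annihilators decrease; once these are minimal, the generators
   coincide. *)
Lemma simple_artinian_noetherian : left_noetherian Q.
Proof.
move=> L LL incL.
pose F X := exists k e, idem_gen (L k) e /\ X = (fun x => x * e = 0).
have FL X : F X -> left_ideal X.
  by move=> [k [e [_ ->]]]; exact: (left_ideal_rmul_preim e (left_ideal0 Q)).
have [e0 he0] := left_ideal_idem_gen (LL 0%N).
have F0 : F (fun x => x * e0 = 0) by exists 0%N, e0.
have [_ [m [e [Le ->]]] Xmin] := left_artinian_min artQ FL (ex_intro _ _ F0).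
have incLm k : (m <= k)%N -> L m `<=` L k.
  elim: k => [|k IH]; first by rewrite leqn0 => /eqP ->.
  by rewrite leq_eqVlt => /orP [/eqP -> // | /IH sub x /sub /incL].
exists m => k mk x; split; last exact: incLm.
have [e' [Le' ee' e'e]] := idem_gen_extend (LL k) (incLm k mk) Le.
have [[ee _] [e'e' _]] := (Le, Le').
have sub : (fun x => x * e' = 0) `<=` (fun x => x * e = 0).
  by move=> y ye'; rewrite -e'e mulrA ye' mul0r.
have e'_e : e' = e.
  have := Xmin _ (ex_intro _ k (ex_intro _ e' (conj Le' erefl))) sub (e' - e).
  rewrite !mulrBl e'e ee e'e' ee' subrr => /(_ erefl) /eqP.
  by rewrite subr_eq0 => /eqP.
by move=> /(proj2 Le' x); rewrite e'_e => ?; apply/(proj2 Le x).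
Qed.

(* K |-> lann K turns descending chains of right ideals into ascending chains
   of left ideals, and K = rann (lann K). *)
Lemma simple_artinian_conv_artinian : left_artinian Q^c.
Proof.
move=> K RK decK.
have [m Hm] := @simple_artinian_noetherian (fun k => lann (K k : Q -> Prop))
  (fun k => left_ideal_lann _) (fun k y Hy z Kz => Hy z (decK k z Kz)).
exists m => k mk x; rewrite !(right_ideal_rann_lann (RK _)).
by split=> H y Hy; apply: H; apply/(Hm k mk).
Qed.

End SimpleLeftArtinian.

Lemma simple_artinian_conv (Q : pzRingType) : simple_artinian Q -> simple_artinian Q^c.
Proof.
move=> [simQ artQ]; split; last exact: simple_artinian_conv_artinian.
by split=> [|I [LI RI]]; [exact: (proj1 simQ) | exact: (proj2 simQ) I (conj RI LI)].
Qed.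

Section LeftNoetherian.
Variable Q : pzRingType.
Hypothesis noethQ : left_noetherian Q.

Lemma left_noetherian_finite_udim : left_finite_udim Q.
Proof.
move=> [I [LI [nzI indI]]].
pose S m x := exists2 y : nat -> Q, forall k, (k < m)%N -> I k (y k) & x = \sum_(k < m) y k.
have I0 k : I k 0 by case: (LI k).
have incS m : S m `<=` S m.+1.
  move=> _ [y Iy ->]; exists (fun k => if (k < m)%N then y k else 0).
    by move=> k _; case: ifP => [/Iy //| _].
  by rewrite big_ord_recr /= ltnn addr0; apply: eq_bigr => i _; rewrite ltn_ord.
have [M HM] := noethQ (fun m => left_ideal_sum m LI) incS.
have [x [IMx x0]] := nzI M.
have [y Iy xy] : S M x.
  apply/(HM M.+1 (leqnSn M)); exists (fun k => if k == M then x else 0).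
    by move=> k _; case: eqP => [-> | _].
  by rewrite big_ord_recr /= eqxx big1 ?add0r // => i _; rewrite (ltn_eqF (ltn_ord i)).
pose z k := if (k < M)%N then y k else - x.
have Iz k : (k < M.+1)%N -> I k (z k).
  rewrite ltnS leq_eqVlt /z => /orP [/eqP -> | kM]; last by rewrite kM; apply: Iy.
  by rewrite ltnn; case: (LI M) => _ [_ [INeg _]]; apply: INeg.
have sumz : \sum_(k < M.+1) z k = 0.
  rewrite big_ord_recr /= /z ltnn xy (eq_bigr (fun i : 'I_M => y i)) ?subrr // => i _.
  by rewrite ltn_ord.
apply: x0; apply/eqP; rewrite -oppr_eq0; apply/eqP.
by have := indI _ _ Iz sumz M (ltnSn M); rewrite /z ltnn.
Qed.

(* lann X = lann (rann (lann X)) is the trace on R of the left ideal of Q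
   annihilating f (rann (lann X)). *)
Lemma acc_lann_of_embedding (R : pzRingType) (f : {rmorphism R -> Q}) :
  injective f -> acc_lann R.
Proof.
move=> finj X incX.
pose A k := lann (fun q => exists2 y, rann (lann (X k)) y & q = f y).
have incA k : A k `<=` A k.+1.
  move=> q Aq _ [y Yy ->]; apply: Aq; exists y => // x Lx; apply: Yy; exact: incX.
have lannE k x : lann (X k) x <-> A k (f x).
  split=> [Lx _ [y Yy ->] | Ax z Xz]; first by rewrite -rmorphM Yy // rmorph0.
  apply: finj; rewrite rmorphM rmorph0; apply: Ax; exists z => // x' Lx'; exact: Lx'.
have [m Hm] := noethQ (fun k => left_ideal_lann _) incA.
by exists m => k mk x; rewrite !lannE; exact: Hm.
Qed.

End LeftNoetherian.

(** * Localizations into a simple artinian ring *)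

Lemma frac_formE (R Q : pzRingType) sd (S : R -> Prop) (f : R -> Q) :
  frac_form sd S f <->
  (sd <> sideR -> forall q, left_frac S f q) /\ (sd <> sideL -> forall q, right_frac S f q).
Proof.
case: sd => /=; split=> [H | [HL HR] q].
- by split=> [_ | n]; [exact: H | case: n].
- exact: HL.
- by split=> [n | _]; [case: n | exact: H].
- exact: HR.
- by split=> _ q; case: (H q).
- by split; [apply: HL | apply: HR].
Qed.

Lemma frac_form_factor (R R' Q : pzRingType) sd (S : R -> Prop) (S' : R' -> Prop)
    (p : R -> R') (f : R -> Q) (g : R' -> Q) :
  (forall r, g (p r) = f r) -> (forall s, S s -> S' (p s)) ->
  frac_form sd S f -> frac_form sd S' g.
Proof.
move=> gpf SS'; rewrite !frac_formE => -[HL HR]; split=> [nR q | nL q].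
  by have [s [r [y [Ss E]]]] := HL nR q; exists (p s), (p r), y; rewrite !gpf; split; auto.
by have [s [r [y [Ss E]]]] := HR nL q; exists (p s), (p r), y; rewrite !gpf; split; auto.
Qed.

Lemma left_frac_cleared (R Q : pzRingType) (S : R -> Prop) (f : R -> Q) q :
  (forall s, S s -> invertible (f s)) -> left_frac S f q ->
  exists s r, invertible (f s) /\ f s * q = f r.
Proof.
move=> invS [s [r [y [Ss [sy [ys ->]]]]]].
by exists s, r; split; [apply: invS | rewrite mulrA sy mul1r].
Qed.

Lemma right_frac_cleared (R Q : pzRingType) (S : R -> Prop) (f : R -> Q) q :
  (forall s, S s -> invertible (f s)) -> right_frac S f q ->
  exists s r, invertible (f s) /\ q * f s = f r.
Proof.
move=> invS [s [r [y [Ss [sy [ys ->]]]]]].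
by exists s, r; split; [apply: invS | rewrite -mulrA ys mulr1].
Qed.

Lemma goldieE (T : pzRingType) sd :
  goldie T sd <-> (sd <> sideR -> left_goldie T) /\ (sd <> sideL -> right_goldie T).
Proof.
case: sd => /=; split=> [H | [HL HR]].
- by split=> [_ | n]; [exact: H | case: n].
- exact: HL.
- by split=> [n | _]; [case: n | exact: H].
- exact: HR.
- by split=> _; case: H.
- by split; [apply: HL | apply: HR].
Qed.

Section LeftOrder.
Variables (R Q : pzRingType) (f : {rmorphism R -> Q}) (S : R -> Prop).
Hypothesis fracS : forall q, left_frac S f q.

Lemma left_frac_invertible (artQ : left_artinian Q) c :
  (forall a, f (a * c) = 0 -> f a = 0) -> invertible (f c).
Proof.
move=> Hc; apply: (left_artinian_lreg_invertible artQ) => x xc.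
have [s [r [y [Ss [sy [ys Ex]]]]]] := fracS x.
rewrite Ex in xc *; suff -> : f r = 0 by rewrite mulr0.
by apply: Hc; rewrite rmorphM -[f r]mul1r -sy -!mulrA (mulrA y) xc mulr0.
Qed.

Lemma right_ideal_of_rmul_closed (artQ : left_artinian Q) (Z : Q -> Prop) :
  left_ideal Z -> (forall z r, Z z -> Z (z * f r)) -> right_ideal Z.
Proof.
move=> LZ Zf; have [Z0 [ZD [ZN _]]] := LZ.
split=> //; split=> //; split=> // p z Zz.
have [s [r [y [_ [sy [ys ->]]]]]] := fracS p.
rewrite mulrA; apply: (Zf); apply: (left_artinian_rmul_inv artQ LZ sy ys) => // w Zw.
exact: Zf.
Qed.

Hypotheses (multS : mult_set S) (invS : forall s, S s -> invertible (f s)).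

Lemma left_frac_ore s r : S s -> exists t u, S t /\ f t * f r = f u * f s.
Proof.
move=> Ss; have [y [sy ys]] := invS Ss.
have [t [u [z [St [tz [zt E]]]]]] := fracS (f r * y).
exists t, u; split=> //.
by rewrite -[f r]mulr1 -ys !mulrA -(mulrA (f t) (f r) y) E !mulrA tz mul1r.
Qed.

Definition frac_ext (I : R -> Prop) (x : Q) := exists s a, [/\ S s, I a & f s * x = f a].

Lemma frac_ext_common (I : nat -> R -> Prop) (x : nat -> Q) m :
  (forall k, left_ideal (I k)) -> (forall k, (k < m)%N -> frac_ext (I k) (x k)) ->
  exists t (a : nat -> R), S t /\ forall k, (k < m)%N -> I k (a k) /\ f t * x k = f (a k).
Proof.
move=> LI; elim: m => [|m IH] Hx.
  by exists 1, (fun=> 0); split=> //; case: multS.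
have [t [a [St Ha]]] := IH (fun k km => Hx k (ltnW km)).
have [s [b [Ss Ib Eb]]] := Hx m (ltnSn m).
have [t' [u [St' E]]] := left_frac_ore t Ss.
exists (t' * t), (fun k => if (k < m)%N then t' * a k else u * b); split.
  by case: multS => _ [_]; apply.
move=> k; rewrite ltnS leq_eqVlt => /orP [/eqP -> | km]; rewrite ?ltnn ?km.
  by split; [case: (LI m) => _ [_ [_]]; apply | rewrite !rmorphM E -mulrA Eb].
have [Iak Ek] := Ha k km.
by split; [case: (LI k) => _ [_ [_]]; apply | rewrite !rmorphM -mulrA Ek].
Qed.

Lemma left_ideal_frac_ext (I : R -> Prop) : left_ideal I -> left_ideal (frac_ext I).
Proof.
move=> LI; have [I0 [ID [IN IM]]] := LI.
split; first by exists 1, 0; split=> //; [case: multS | rewrite mulr0 rmorph0].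
split.
  move=> x1 x2 [s1 [a1 [S1 I1 E1]]] [s2 [a2 [S2 I2 E2]]].
  have [t [u [St E]]] := left_frac_ore s2 S1.
  exists (t * s2), (u * a1 + t * a2); split; first by case: multS => _ [_]; apply.
    by apply: ID; apply: IM.
  by rewrite rmorphD !rmorphM mulrDr {1}E -!mulrA E1 E2.
split.
  move=> x [s [a [Ss Ia E]]]; exists s, (- a).
  by split; [| apply: IN | rewrite mulrN E rmorphN].
move=> p x [s [a [Ss Ia E]]].
have [s' [r' [y [Ss' [sy [ys ->]]]]]] := fracS p.
have [t [u [St E2]]] := left_frac_ore r' Ss.
exists (t * s'), (u * a); split; first by case: multS => _ [_]; apply.
  exact: IM.
by rewrite !rmorphM -!mulrA (mulrA (f s')) sy mul1r mulrA E2 -mulrA E.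
Qed.

(* The extension frac_ext I is a nonzero two-sided ideal of Q, so it contains 1. *)
Lemma ideal_meets_units (simQ : simple_ring Q) (artQ : left_artinian Q) (I : R -> Prop) :
  ideal I -> (exists a, I a /\ f a <> 0) -> exists c, I c /\ invertible (f c).
Proof.
move=> [LI [_ [_ [_ IR]]]] [a [Ia fa0]].
have LZ := left_ideal_frac_ext LI.
have RZ : right_ideal (frac_ext I).
  apply: right_ideal_of_rmul_closed => // z r [s [b [Ss Ib E]]].
  by exists s, (b * r); split=> //; [apply: IR | rewrite mulrA E rmorphM].
case: (proj2 simQ _ (conj LZ RZ)) => [Z0 | Z1].
  by case: fa0; apply: Z0; exists 1, a; split=> //; [case: multS | rewrite rmorph1 mul1r].
have [s [c [Ss Ic E]]] := Z1 1.
by exists c; split=> //; rewrite -E mulr1; apply: invS.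
Qed.

Lemma left_order_finite_udim : injective f -> left_finite_udim Q -> left_finite_udim R.
Proof.
move=> finj udimQ [I [LI [nzI indI]]]; apply: udimQ.
exists (fun k => frac_ext (I k)); split; first by move=> k; apply: left_ideal_frac_ext.
split.
  move=> k; have [a [Ia a0]] := nzI k; exists (f a); split.
    by exists 1, a; split=> //; [case: multS | rewrite rmorph1 mul1r].
  by move=> fa0; apply: a0; apply: finj; rewrite fa0 rmorph0.
move=> m x Ix sx.
have [t [a [St Ha]]] := frac_ext_common LI Ix.
have suma : \sum_(k < m) a k = 0.
  apply: finj; rewrite rmorph_sum rmorph0 (eq_bigr (fun k : 'I_m => f t * x k)) => [|k _].
    by rewrite -mulr_sumr sx mulr0.
  by case: (Ha k (ltn_ord k)) => _ <-.
move=> k km; have [y [ty yt]] := invS St.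
have := indI m a (fun k km => proj1 (Ha k km)) suma k km.
by case: (Ha k km) => _ E a0; rewrite -[x k]mul1r -yt -mulrA E a0 rmorph0 mulr0.
Qed.

End LeftOrder.

Section SidedLocalization.
Variables (R Q : pzRingType) (sd : side) (f : {rmorphism R -> Q}) (S : R -> Prop).
Hypotheses (saQ : simple_artinian Q) (fracS : frac_form sd S f).

Lemma frac_form_cases :
  (forall q, left_frac S f q) \/ (forall q, @left_frac R^c S Q^c (conv_fun f) q).
Proof.
have [HL HR] := (frac_formE sd S f).1 fracS.
case: sd HL HR => HL HR.
- by left; apply: HL.
- by right=> q; apply/left_frac_conv/HR.
- by left; apply: HL.
Qed.

Lemma kernel_cset_invertible c : cset (fun r => f r = 0) c -> invertible (f c).
Proof.
move=> Cc; case: frac_form_cases => fracL.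
  by apply: (left_frac_invertible fracL (proj2 saQ)) => a; case: (Cc a).
apply/invertible_conv.
apply: (@left_frac_invertible R^c Q^c (conv_fun f) S fracL (proj2 (simple_artinian_conv saQ))).
by move=> a; case: (Cc a).
Qed.

Hypotheses (multS : mult_set S) (invS : forall s, S s -> invertible (f s)).

Lemma ideal_meets_units_sided (I : R -> Prop) :
  ideal I -> (exists a, I a /\ f a <> 0) -> exists c, I c /\ invertible (f c).
Proof.
move=> [LI RI] nzI; case: frac_form_cases => fracL.
  exact: (ideal_meets_units fracL multS invS (proj1 saQ) (proj2 saQ) (conj LI RI) nzI).
have saQc := simple_artinian_conv saQ.
have invSc s : S s -> @invertible Q^c (conv_fun f s) by move=> Ss; apply/invertible_conv/invS.
have [c [Ic /invertible_conv fc]] :=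
  ideal_meets_units fracL (mult_set_conv multS) invSc (proj1 saQc) (proj2 saQc)
    (I := I) (conj RI LI) nzI.
by exists c.
Qed.

Lemma kernel_prime : prime_ideal (fun r => f r = 0).
Proof.
split; first exact: (ideal_preim f (ideal0 Q)).
split; first by exists 1; rewrite rmorph1; exact: (proj1 (proj1 saQ)).
move=> A B IA IB AB; case: (classic (exists a, A a /\ f a <> 0)) => [nzA | zA]; last first.
  by left=> a Aa; apply: NNPP => fa; apply: zA; exists a.
right=> b Bb; have [c [Ac [w [cw wc]]]] := ideal_meets_units_sided IA nzA.
by rewrite -[f b]mul1r -wc -mulrA -rmorphM AB // mulr0.
Qed.

End SidedLocalization.

Lemma classical_quotient_of_order (R Q : pzRingType) sd (f : {rmorphism R -> Q}) :
  simple_artinian Q -> injective f -> frac_form sd (@regular R) f -> classical_quotient sd f.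
Proof.
move=> saQ finj fracC; split=> //; split=> // c Cc.
have inj0 x : f x = 0 -> x = 0 by move=> fx; apply: finj; rewrite fx rmorph0.
apply: (kernel_cset_invertible saQ fracC) => a.
by split=> [/inj0 /(proj1 (Cc a)) | /inj0 /(proj2 (Cc a))] ->; rewrite rmorph0.
Qed.

Lemma goldie_of_classical_quotient (R Q : pzRingType) sd (j : {rmorphism R -> Q}) :
  simple_artinian Q -> classical_quotient sd j -> goldie R sd.
Proof.
move=> saQ [jinj [jinv fracC]].
have saQc := simple_artinian_conv saQ.
have noethQ := simple_artinian_noetherian (proj1 saQ) (proj2 saQ).
have noethQc := simple_artinian_noetherian (proj1 saQc) (proj2 saQc).
have multC : mult_set (@regular R).
  by apply: mult_set_regular => e; apply: (proj1 (proj1 saQ)); rewrite -(rmorph1 j) e rmorph0.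
have [HL HR] := (frac_formE sd _ j).1 fracC.
apply/goldieE; split=> nd; split.
- exact: (acc_lann_of_embedding noethQ jinj).
- apply: (left_order_finite_udim (HL nd) multC jinv jinj).
  exact: (left_noetherian_finite_udim noethQ).
- exact (acc_lann_of_embedding noethQc (f := conv_fun j : {rmorphism R^c -> Q^c}) jinj).
- have invC (c : R) : regular c -> @invertible Q^c (conv_fun j c).
    by move=> Cc; exact ((invertible_conv (j c)).2 (jinv c Cc)).
  exact (@left_order_finite_udim R^c Q^c (conv_fun j) (@regular R)
    (fun q => left_frac_conv (HR nd q)) (mult_set_conv multC) invC jinj
    (left_noetherian_finite_udim noethQc)).
Qed.

Lemma universal_loc_sub (R Q : pzRingType) (f : {rmorphism R -> Q}) (S S' : R -> Prop) :
  S `<=` S' -> (forall s, S' s -> invertible (f s)) -> universal_loc S f -> universal_loc S' f.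
Proof.
move=> SS' invS' [_ univS]; split=> // T g ginv.
by apply: univS => s Ss; apply/ginv/SS'.
Qed.

Section UniversalLocalization.
Variables (R Q : pzRingType) (sd : side) (f : {rmorphism R -> Q}) (S : R -> Prop).
Hypotheses (saQ : simple_artinian Q) (locS : universal_loc S f) (fracS : localizable sd S f).

Let C := cset (fun r => f r = 0).

Let S_sub_C : S `<=` C.
Proof. by move=> s /(proj1 locS) /cset_of_invertible. Qed.

Lemma kernel_cset_inL : inL sd C.
Proof.
have [one0 fracF] := fracS.
split; first by apply: mult_set_cset; [rewrite rmorph0 | exists 1; rewrite rmorph1].
exists Q, f; split.
  exact: (universal_loc_sub S_sub_C (kernel_cset_invertible saQ fracF) locS).
by split=> //; apply: (frac_form_factor (p := id) (fun=> erefl) S_sub_C fracF).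
Qed.

Lemma kernel_cset_maximal (T : R -> Prop) : inL sd T -> C `<=` T -> forall x, T x <-> C x.
Proof.
move=> [_ [QT [fT [[invT _] [oneT _]]]]] CT x; split=> [Tx|]; last exact: CT.
have [g [gf _]] := proj2 locS QT fT (fun s Ss => invT s (CT s (S_sub_C Ss))).
have g_inj0 q : g q = 0 -> q = 0.
  case: (proj2 (proj1 saQ) _ (ideal_preim g (ideal0 QT))) => [K0 | K1]; first exact: K0.
  by case: oneT; rewrite -(rmorph1 g); apply: K1.
apply: cset_of_invertible; apply: (left_artinian_lreg_invertible (proj2 saQ)) => q qx.
have [w [xw wx]] := invT x Tx.
by apply: g_inj0; rewrite -[g q]mulr1 -xw mulrA -gf -rmorphM qx rmorph0 mul0r.
Qed.

End UniversalLocalization.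

Section QuotientLift.
Variables (R Ri Q : pzRingType) (pi : {rmorphism R -> Ri}) (phi : {rmorphism R -> Q}).
Hypotheses (pi_surj : forall y, exists r, pi r = y) (pi_ker : forall r, pi r = 0 <-> phi r = 0).

Definition quot_lift (y : Ri) : Q :=
  phi (proj1_sig (constructive_indefinite_description _ (pi_surj y))).

Lemma quot_liftE r : quot_lift (pi r) = phi r.
Proof.
rewrite /quot_lift; case: constructive_indefinite_description => r' /= e.
by apply/eqP; rewrite -subr_eq0 -rmorphB; apply/eqP/pi_ker; rewrite rmorphB e subrr.
Qed.

Fact quot_lift_is_nmod : nmod_morphism quot_lift.
Proof.
split=> [|x y]; first by rewrite -(rmorph0 pi) quot_liftE rmorph0.
have [[r1 <-] [r2 <-]] := (pi_surj x, pi_surj y).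
by rewrite -rmorphD !quot_liftE rmorphD.
Qed.

Fact quot_lift_is_monoid : monoid_morphism quot_lift.
Proof.
split=> [|x y]; first by rewrite -(rmorph1 pi) quot_liftE rmorph1.
have [[r1 <-] [r2 <-]] := (pi_surj x, pi_surj y).
by rewrite -rmorphM !quot_liftE rmorphM.
Qed.

HB.instance Definition _ := GRing.isNmodMorphism.Build Ri Q quot_lift quot_lift_is_nmod.
HB.instance Definition _ := GRing.isMonoidMorphism.Build Ri Q quot_lift quot_lift_is_monoid.

Lemma quot_lift_inj : injective quot_lift.
Proof.
move=> x y; have [[r1 <-] [r2 <-]] := (pi_surj x, pi_surj y); rewrite !quot_liftE => e.
by apply/eqP; rewrite -subr_eq0 -rmorphB; apply/eqP/pi_ker; rewrite rmorphB e subrr.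
Qed.

Lemma semiprime_of_prime_kernel : prime_ideal (fun r => phi r = 0) -> semiprime Ri.
Proof.
move=> [_ [_ primeK]] A IA AA a Aa.
have IA' := ideal_preim pi IA.
have AA' x y : A (pi x) -> A (pi y) -> phi (x * y) = 0.
  by move=> Ax Ay; apply/pi_ker; rewrite rmorphM; apply: AA.
have [r pr] := pi_surj a; rewrite -pr in Aa *.
by apply/pi_ker; case: (primeK _ _ IA' IA' AA') => H; apply: H.
Qed.

Lemma quotient_goldie_classical sd (S : R -> Prop) :
  mult_set S -> (forall s, S s -> invertible (phi s)) -> frac_form sd S phi ->
  simple_artinian Q ->
  (semiprime Ri /\ goldie Ri sd) /\
  exists psi : {rmorphism Ri -> Q}, (forall r, psi (pi r) = phi r) /\ classical_quotient sd psi.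
Proof.
move=> multS invS fracS saQ.
have CQ : classical_quotient sd quot_lift.
  apply: (classical_quotient_of_order saQ quot_lift_inj).
  apply: (frac_form_factor quot_liftE _ fracS) => s Ss.
  by have := invS s Ss; rewrite -quot_liftE => /(regular_of_invertible quot_lift_inj).
split; last by exists quot_lift; split=> //; exact: quot_liftE.
split; first exact: (semiprime_of_prime_kernel (kernel_prime saQ fracS multS invS)).
exact: (goldie_of_classical_quotient saQ CQ).
Qed.

End QuotientLift.

(** * Finitely many localizations *)

Section CommonDenominator.
Variables (I : finType) (R : pzRingType) (Q : I -> pzRingType).
Variable phi : forall i, {rmorphism R -> Q i}.

(* In Q_i only the i-th term of sum_k c_k s_k survives. *)
Lemma common_left_denominator (c : I -> R) (y : forall i, Q i) :
  (forall i, invertible (phi i (c i))) -> (forall i k, k != i -> phi i (c k) = 0) ->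
  (forall i, exists s r, invertible (phi i s) /\ phi i s * y i = phi i r) ->
  exists d r, (forall i, invertible (phi i d)) /\ forall i, phi i d * y i = phi i r.
Proof.
move=> cinv c0 fracy.
have fracy' i : exists p : R * R, invertible (phi i p.1) /\ phi i p.1 * y i = phi i p.2.
  by have [s [r H]] := fracy i; exists (s, r).
have [sr Hsr] := ClassicalEpsilon.choice _ fracy'.
have diag (a : I -> R) i : phi i (\sum_k c k * a k) = phi i (c i) * phi i (a i).
  rewrite rmorph_sum (bigD1 i) //= big1 ?addr0 ?rmorphM // => k ki.
  by rewrite rmorphM c0 ?mul0r.
exists (\sum_k c k * (sr k).1), (\sum_k c k * (sr k).2); split=> i; rewrite !diag.
  exact: (invertibleM (cinv i) (Hsr i).1).
by rewrite -mulrA (Hsr i).2.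
Qed.

End CommonDenominator.

Lemma common_right_denominator (I : finType) (R : pzRingType) (Q : I -> pzRingType)
    (phi : forall i, {rmorphism R -> Q i}) (c : I -> R) (y : forall i, Q i) :
  (forall i, invertible (phi i (c i))) -> (forall i k, k != i -> phi i (c k) = 0) ->
  (forall i, exists s r, invertible (phi i s) /\ y i * phi i s = phi i r) ->
  exists d r, (forall i, invertible (phi i d)) /\ forall i, y i * phi i d = phi i r.
Proof.
move=> cinv c0 fracy.
pose phic i : {rmorphism R^c -> (Q i)^c} := conv_fun (phi i).
have fracyc i : exists s r, @invertible (Q i)^c (phic i s) /\ phic i s * (y i : (Q i)^c) = phic i r.
  by have [s [r [/invertible_conv si E]]] := fracy i; exists s, r.
have [d [r [dinv E]]] := @common_left_denominator I R^c (fun i => (Q i)^c) phic c y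
  (fun i => (invertible_conv (phi i (c i))).2 (cinv i)) c0 fracyc.
by exists d, r; split=> [i | i]; [apply/invertible_conv/dinv | apply: E].
Qed.

Section ProductRing.
Variables (I : finType) (Q : I -> pzRingType).

Definition prod_ring := {dffun forall i, Q i}.
HB.instance Definition _ := Choice.on prod_ring.

Let zero : prod_ring := [ffun i => 0].
Let one : prod_ring := [ffun i => 1].
Let opp (x : prod_ring) : prod_ring := [ffun i => - x i].
Let add (x y : prod_ring) : prod_ring := [ffun i => x i + y i].
Let mul (x y : prod_ring) : prod_ring := [ffun i => x i * y i].

Let addA : associative add.
Proof. by move=> x y z; apply/ffunP => i; rewrite !ffunE addrA. Qed.
Let addC : commutative add.
Proof. by move=> x y; apply/ffunP => i; rewrite !ffunE addrC. Qed.
Let add0 : left_id zero add.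
Proof. by move=> x; apply/ffunP => i; rewrite !ffunE add0r. Qed.
Let addN : left_inverse zero opp add.
Proof. by move=> x; apply/ffunP => i; rewrite !ffunE addNr. Qed.
Let mulA : associative mul.
Proof. by move=> x y z; apply/ffunP => i; rewrite !ffunE mulrA. Qed.
Let mul1 : left_id one mul.
Proof. by move=> x; apply/ffunP => i; rewrite !ffunE mul1r. Qed.
Let mul1' : right_id one mul.
Proof. by move=> x; apply/ffunP => i; rewrite !ffunE mulr1. Qed.
Let mulDl : left_distributive mul add.
Proof. by move=> x y z; apply/ffunP => i; rewrite !ffunE mulrDl. Qed.
Let mulDr : right_distributive mul add.
Proof. by move=> x y z; apply/ffunP => i; rewrite !ffunE mulrDr. Qed.

HB.instance Definition _ :=
  GRing.isPzRing.Build prod_ring addA addC add0 addN mulA mul1 mul1' mulDl mulDr.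

Lemma prod_zeroE i : (0 : prod_ring) i = 0. Proof. exact: ffunE. Qed.
Lemma prod_oneE i : (1 : prod_ring) i = 1. Proof. exact: ffunE. Qed.
Lemma prod_addE (x y : prod_ring) i : (x + y) i = x i + y i. Proof. exact: ffunE. Qed.
Lemma prod_mulE (x y : prod_ring) i : (x * y) i = x i * y i. Proof. exact: ffunE. Qed.

Definition prod_proj i (x : prod_ring) : Q i := x i.

Fact prod_proj_is_nmod i : nmod_morphism (prod_proj i).
Proof. by split=> [|x y]; [exact: prod_zeroE | exact: prod_addE]. Qed.
Fact prod_proj_is_monoid i : monoid_morphism (prod_proj i).
Proof. by split=> [|x y]; [exact: prod_oneE | exact: prod_mulE]. Qed.
HB.instance Definition _ i :=
  GRing.isNmodMorphism.Build _ _ (prod_proj i) (prod_proj_is_nmod i).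
HB.instance Definition _ i :=
  GRing.isMonoidMorphism.Build _ _ (prod_proj i) (prod_proj_is_monoid i).

Lemma prod_proj_eq0 x : (forall i, prod_proj i x = 0) -> x = 0.
Proof. by move=> x0; apply/ffunP => i; rewrite prod_zeroE; apply: x0. Qed.

Lemma prod_proj_surj (y : forall i, Q i) : exists x, forall i, prod_proj i x = y i.
Proof. by exists [ffun i => y i] => i; rewrite /prod_proj ffunE. Qed.

Lemma prod_invertible (x : prod_ring) : (forall i, invertible (x i)) -> invertible x.
Proof.
move=> invx; exists [ffun i => proj1_sig (constructive_indefinite_description _ (invx i))].
by split; apply/ffunP=> i; rewrite prod_mulE prod_oneE ffunE;
  case: constructive_indefinite_description => y [].
Qed.

Variables (R : pzRingType) (phi : forall i, {rmorphism R -> Q i}).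

Definition prod_diag (r : R) : prod_ring := [ffun i => phi i r].

Fact prod_diag_is_nmod : nmod_morphism prod_diag.
Proof.
by split=> [|x y]; apply/ffunP=> i; rewrite ?prod_addE !ffunE ?rmorph0 ?rmorphD.
Qed.
Fact prod_diag_is_monoid : monoid_morphism prod_diag.
Proof.
by split=> [|x y]; apply/ffunP=> i; rewrite ?prod_mulE !ffunE ?rmorph1 ?rmorphM.
Qed.
HB.instance Definition _ := GRing.isNmodMorphism.Build _ _ prod_diag prod_diag_is_nmod.
HB.instance Definition _ := GRing.isMonoidMorphism.Build _ _ prod_diag prod_diag_is_monoid.

Lemma prod_diagE r i : prod_diag r i = phi i r. Proof. exact: ffunE. Qed.

Lemma prod_diag_invertible d : (forall i, invertible (phi i d)) -> invertible (prod_diag d).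
Proof. by move=> dinv; apply: prod_invertible => i; rewrite prod_diagE. Qed.

Hypothesis diag_inj : injective prod_diag.

Lemma prod_diag_left_frac (y : prod_ring) d r :
  (forall i, invertible (phi i d)) -> (forall i, phi i d * y i = phi i r) ->
  left_frac (@regular R) prod_diag y.
Proof.
move=> dinv E; have [Y [dY Yd]] := prod_diag_invertible dinv.
exists d, r, Y; split; first exact: (regular_of_invertible diag_inj (prod_diag_invertible dinv)).
split=> //; split=> //; apply/ffunP => i.
by rewrite prod_mulE prod_diagE -E mulrA -(prod_diagE d) -prod_mulE Yd prod_oneE mul1r.
Qed.

Lemma prod_diag_right_frac (y : prod_ring) d r :
  (forall i, invertible (phi i d)) -> (forall i, y i * phi i d = phi i r) ->
  right_frac (@regular R) prod_diag y.
Proof.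
move=> dinv E; have [Y [dY Yd]] := prod_diag_invertible dinv.
exists d, r, Y; split; first exact: (regular_of_invertible diag_inj (prod_diag_invertible dinv)).
split=> //; split=> //; apply/ffunP => i.
by rewrite prod_mulE prod_diagE -E -mulrA -(prod_diagE d) -prod_mulE dY prod_oneE mulr1.
Qed.

End ProductRing.

Section FamilyOfLocalizations.
Variables (R : pzRingType) (sd : side) (I : finType) (S : I -> R -> Prop).
Variables (Q : I -> pzRingType) (phi : forall i, {rmorphism R -> Q i}).
Hypotheses (multS : forall i, mult_set (S i)) (invS : forall i s, S i s -> invertible (phi i s)).
Hypotheses (fracS : forall i, frac_form sd (S i) (phi i)) (saQ : forall i, simple_artinian (Q i)).
Hypothesis cap0 : forall r, (forall i, ass (phi i) r) -> r = 0.
Hypothesis capN0 : forall i, exists r, r <> 0 /\ forall j, j != i -> ass (phi j) r.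

Definition ass_but i r := forall j, j != i -> ass (phi j) r.

Lemma ass_prime i : prime_ideal (ass (phi i)).
Proof. exact (kernel_prime (@saQ i) (@fracS i) (@multS i) (@invS i)). Qed.

Lemma ideal_ass i : ideal (ass (phi i)).
Proof. exact: (ideal_preim (phi i) (ideal0 (Q i))). Qed.

Lemma ideal_ass_but i : ideal (ass_but i).
Proof. exact: (ideal_cap (fun j => j != i) ideal_ass). Qed.

Lemma ass_but_cap0 i x : ass_but i x -> ass (phi i) x -> x = 0.
Proof. by move=> Hx Px; apply: cap0 => j; case: (eqVneq j i) => [-> | /Hx]. Qed.

Lemma ass_but_not_sub i : ~ ass_but i `<=` ass (phi i).
Proof. by move=> sub; have [r [r0 Hr]] := @capN0 i; apply/r0/(ass_but_cap0 Hr)/sub. Qed.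

Lemma regular_cset_ass i c : regular c -> cset (ass (phi i)) c.
Proof.
exact: (regular_cset (ass_prime i) (ideal_ass_but i) (@ass_but_cap0 i) (@ass_but_not_sub i)).
Qed.

Lemma prime_contains_ass P : prime_ideal P -> exists i, ass (phi i) `<=` P.
Proof.
move=> primeP; have [|i _ sub] := prime_ideal_cap (s := enum I) primeP ideal_ass; last by exists i.
move=> x Hx; have -> : x = 0 by apply: cap0 => i; apply: Hx; rewrite mem_enum.
by case: primeP => [[[P0 _] _] _].
Qed.

Lemma minimal_prime_ass P : minimal_prime P <-> exists i, forall x, P x <-> ass (phi i) x.
Proof.
split=> [[primeP Pmin] | [i Pi]].
  have [i sub] := prime_contains_ass primeP.
  by exists i => x; split=> [|/sub //]; apply: Pmin (ass_prime i) sub x.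
have -> : P = ass (phi i).
  by apply: functional_extensionality => x; apply: propositional_extensionality.
split=> [|P' primeP' sub]; first exact: ass_prime.
have [j subj] := prime_contains_ass primeP'.
case: (eqVneq j i) => [<- // | ji].
by case: (ass_but_not_sub (i := i)) => x Hx; apply/sub/subj/Hx.
Qed.

Lemma ass_but_units : exists c : I -> R, forall i, ass_but i (c i) /\ invertible (phi i (c i)).
Proof.
apply: (ClassicalEpsilon.choice (fun i c => ass_but i c /\ invertible (phi i c))) => i.
apply: (ideal_meets_units_sided (@saQ i) (@fracS i) (@multS i) (@invS i) (ideal_ass_but i)).
by have [r [r0 Hr]] := @capN0 i; exists r; split=> // /(ass_but_cap0 Hr).
Qed.

Lemma prod_diag_inj : injective (prod_diag phi).
Proof.
move=> x y e; apply/eqP; rewrite -subr_eq0; apply/eqP/cap0 => i.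
by rewrite /ass rmorphB -!(prod_diagE phi) e subrr.
Qed.

Lemma classical_quotient_prod : classical_quotient sd (prod_diag phi).
Proof.
have [c Hc] := ass_but_units.
have cinv i : invertible (phi i (c i)) := proj2 (Hc i).
have c0 i k : k != i -> phi i (c k) = 0 by move=> ki; apply: (proj1 (Hc k)); rewrite eq_sym.
split; first exact: prod_diag_inj.
split.
  move=> d Cd; apply: prod_diag_invertible => i.
  exact: (kernel_cset_invertible (@saQ i) (@fracS i) (regular_cset_ass i Cd)).
have fracSE i := (frac_formE sd (S i) (phi i)).1 (@fracS i).
apply/frac_formE; split=> [nR y | nL y].
  have [|d [r [dinv E]]] := common_left_denominator (y := y) cinv c0.
    by move=> i; apply: (left_frac_cleared (@invS i)); apply: (fracSE i).1.
  exact: (prod_diag_left_frac prod_diag_inj dinv E).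
have [|d [r [dinv E]]] := common_right_denominator (y := y) cinv c0.
  by move=> i; apply: (right_frac_cleared (@invS i)); apply: (fracSE i).2.
exact: (prod_diag_right_frac prod_diag_inj dinv E).
Qed.

End FamilyOfLocalizations.

Theorem theorem1p13 (R : pzRingType) (sd : side) (n : nat)
  (S : 'I_n -> R -> Prop) (Q : 'I_n -> pzRingType)
  (phi : forall i, {rmorphism R -> Q i})
  (hmult : forall i, mult_set (S i))
  (hloc : forall i, universal_loc (S i) (phi i))
  (hL : forall i, localizable sd (S i) (phi i))
  (hsa : forall i, simple_artinian (Q i))
  (hcap : forall r : R, (forall i, ass (phi i) r) -> r = 0)
  (hcap' : forall i, exists r : R, r <> 0 /\ forall j, j != i -> ass (phi j) r) :
  (* (1) and (3): for every model R_i = R/p_i of the quotient ring *)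
  (forall i (Ri : pzRingType) (pi : {rmorphism R -> Ri}),
      (forall y : Ri, exists r, pi r = y) ->
      (forall r, pi r = 0 <-> ass (phi i) r) ->
      (semiprime Ri /\ goldie Ri sd) /\
      exists psi : {rmorphism Ri -> Q i},
        (forall r, psi (pi r) = phi i r) /\ classical_quotient sd psi) /\
  (* (2) min(R) = {p_1, ..., p_n} *)
  (forall P : R -> Prop,
      minimal_prime P <-> exists i, forall x, P x <-> ass (phi i) x) /\
  (* (4) S_i ⊆ C(p_i) *)
  (forall i s, S i s -> cset (ass (phi i)) s) /\
  (* (5) Q_{*,cl}(R) ≅ prod_i Q_i *)
  (exists (Qc : pzRingType) (j : {rmorphism R -> Qc}),
      classical_quotient sd j /\
      exists proj : forall i, {rmorphism Qc -> Q i},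
        (forall x, (forall i, proj i x = 0) -> x = 0) /\
        (forall y : forall i, Q i, exists x, forall i, proj i x = y i)) /\
  (* (6) C(p_i) ∈ max L_*(R) *)
  (forall i, inL sd (cset (ass (phi i))) /\
      forall T : R -> Prop, inL sd T -> (forall x, cset (ass (phi i)) x -> T x) ->
        forall x, T x <-> cset (ass (phi i)) x).
Proof.
have invS i : forall s, S i s -> invertible (phi i s) := proj1 (hloc i).
have fracS i : frac_form sd (S i) (phi i) := proj2 (hL i).
split.
  move=> i Ri pi pi_surj pi_ker.
  exact: (quotient_goldie_classical pi_surj pi_ker (hmult i) (invS i) (fracS i) (hsa i)).
split; first exact: (minimal_prime_ass hmult invS fracS hsa hcap).
split; first by move=> i s /(invS i) /cset_of_invertible.
split.
  exists (prod_ring Q), (prod_diag phi); split.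
    exact: (classical_quotient_prod hmult invS fracS hsa hcap hcap').
  by exists (@prod_proj _ Q); split; [exact: prod_proj_eq0 | exact: prod_proj_surj].
move=> i; split; first exact: (kernel_cset_inL (hsa i) (hloc i) (hL i)).
exact (kernel_cset_maximal (hsa i) (hloc i)).
Qed.
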